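(* Let $f:\mathbb{R}^n\times\mathbb{R}^m\to\mathbb{R}^n$ be a polynomial map and let $\boldsymbol\psi:\mathbb{R}^n\to\mathbb{R}^m$ be a function whose graph admits the representation \[ \{(x,\boldsymbol\psi(x)) : x\in\mathbb{R}^n\} = \{(x,u)\in\mathbb{R}^n\times\mathbb{R}^m \mid \exists\,\lambda\in\mathbb{R}^{n_\lambda}\ \text{s.t.}\ g(x,u,\lambda)\ge 0,\ h(x,u,\lambda)=0\} \] for some vector-valued polynomial maps $g,h$ (inequalities componentwise). Consider the closed-loop system $x_{k+1} = f(x_k,\boldsymbol\psi(x_k))$. Let \[ \mathbf{K} = \{(x,u,\lambda,x^+,u^+,\lambda^+) \mid x^+ = f(x,u),\ g(x,u,\lambda)\ge 0,\ h(x,u,\lambda)=0,\ g(x^+,u^+,\lambda^+)\ge 0,\ h(x^+,u^+,\lambda^+)=0\}. \] Suppose a continuous function $V:\mathbb{R}^n\times\mathbb{R}^m\times\mathbb{R}^{n_\lambda}\to\mathbb{R}$ satisfies, for all $(x,u,\lambda,x^+,u^+,\lambda^+)\in\mathbf{K}$, \[ V(x^+,u^+,\lambda^+) - V(x,u,\lambda) \le -\|x\|_2^2, \qquad V(x,u,\lambda)\ge 0. \] Then: (1) the closed-loop system is globally attractive, i.e., $x_k\to 0$ for every initial condition $x_0$; (2) if in addition the function $x\mapsto \inf\{\|u\|_2+\|\lambda\|_2 \mid g(x,u,\lambda)\ge 0,\ h(x,u,\lambda)=0\}$ is bounded on some neighborhood of the origin, or $V$ does not depend on $(u,\lambda)$,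 then the closed-loop system is globally asymptotically stable.
   Context: The closed-loop system $x^+=f(x,\boldsymbol\psi(x))$ is called globally asymptotically stable if (i) for all initial conditions $x_0$, $\lim_{k\to\infty}x_k = 0$ (global attractivity), and (ii) for every $\epsilon>0$ there exists $\delta>0$ such that $\|x_0\|_2\le\delta$ implies $\|x_k\|_2\le\epsilon$ for all $k$ (Lyapunov stability). *)

From HB Require Import structures.
From mathcomp Require Import all_boot all_order all_algebra.
From mathcomp Require Import all_classical all_reals all_analysis.
Set Implicit Arguments. Unset Strict Implicit. Unset Printing Implicit Defensive.
Import Order.TTheory GRing.Theory Num.Theory.
Import numFieldNormedType.Exports.
Local Open Scope classical_set_scope.
Local Open Scope ring_scope.

Section Defs.
Variable R : realType.

Inductive poly_fun (k : nat) : ('rV[R]_k -> R) -> Prop :=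
| poly_const (a : R) : poly_fun (fun _ => a)
| poly_coord (i : 'I_k) : poly_fun (fun v => v ord0 i)
| poly_add p q : poly_fun p -> poly_fun q -> poly_fun (fun v => p v + q v)
| poly_mul p q : poly_fun p -> poly_fun q -> poly_fun (fun v => p v * q v).

Definition poly_map (k l : nat) (F : 'rV[R]_k -> 'rV[R]_l) : Prop :=
  forall j : 'I_l, poly_fun (fun v => F v ord0 j).

(* Polynomial maps of two / three vector arguments (jointly polynomial in
   the concatenated variables). *)
Definition poly_map2 (n m l : nat) (F : 'rV[R]_n -> 'rV[R]_m -> 'rV[R]_l) : Prop :=
  poly_map (fun z : 'rV[R]_(n + m) => F (lsubmx z) (rsubmx z)).

Definition poly_map3 (n m p l : nat)
  (F : 'rV[R]_n -> 'rV[R]_m -> 'rV[R]_p -> 'rV[R]_l) : Prop :=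
  poly_map (fun z : 'rV[R]_(n + m + p) =>
     F (lsubmx (lsubmx z)) (rsubmx (lsubmx z)) (rsubmx z)).

Definition norm2 (k : nat) (x : 'rV[R]_k) : R :=
  Num.sqrt (\sum_(i < k) (x ord0 i) ^+ 2).

Definition vnonneg (k : nat) (v : 'rV[R]_k) : Prop := forall i, 0 <= v ord0 i.

Definition feasible (n m nl pg ph : nat)
  (g : 'rV[R]_n -> 'rV[R]_m -> 'rV[R]_nl -> 'rV[R]_pg)
  (h : 'rV[R]_n -> 'rV[R]_m -> 'rV[R]_nl -> 'rV[R]_ph)
  (x : 'rV[R]_n) (u : 'rV[R]_m) (lam : 'rV[R]_nl) : Prop :=
  vnonneg (g x u lam) /\ h x u lam = 0.

Definition traj (n m : nat) (f : 'rV[R]_n -> 'rV[R]_m -> 'rV[R]_n)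
  (psi : 'rV[R]_n -> 'rV[R]_m) (x0 : 'rV[R]_n) (k : nat) : 'rV[R]_n :=
  iter k (fun x => f x (psi x)) x0.

Definition globally_attractive (n m : nat) (f : 'rV[R]_n -> 'rV[R]_m -> 'rV[R]_n)
  (psi : 'rV[R]_n -> 'rV[R]_m) : Prop :=
  forall x0 : 'rV[R]_n, traj f psi x0 @ \oo --> (0 : 'rV[R]_n).

Definition lyapunov_stable (n m : nat) (f : 'rV[R]_n -> 'rV[R]_m -> 'rV[R]_n)
  (psi : 'rV[R]_n -> 'rV[R]_m) : Prop :=
  forall eps : R, 0 < eps -> exists2 delta : R, 0 < delta &
    forall x0 : 'rV[R]_n, norm2 x0 <= delta -> forall k, norm2 (traj f psi x0 k) <= eps.

Definition GAS (n m : nat) (f : 'rV[R]_n -> 'rV[R]_m -> 'rV[R]_n)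
  (psi : 'rV[R]_n -> 'rV[R]_m) : Prop :=
  globally_attractive f psi /\ lyapunov_stable f psi.

Definition min_cost (n m nl pg ph : nat)
  (g : 'rV[R]_n -> 'rV[R]_m -> 'rV[R]_nl -> 'rV[R]_pg)
  (h : 'rV[R]_n -> 'rV[R]_m -> 'rV[R]_nl -> 'rV[R]_ph) (x : 'rV[R]_n) : R :=
  inf [set c : R | exists u lam, feasible g h x u lam /\ c = norm2 u + norm2 lam].

End Defs.

From HB Require Import structures.
From mathcomp Require Import all_boot all_order all_algebra.
From mathcomp Require Import all_classical all_reals all_analysis.
Import Order.TTheory GRing.Theory Num.Theory.
Import numFieldNormedType.Exports.
Local Open Scope classical_set_scope.
Local Open Scope ring_scope.
From mathcomp Require Import lra.

(* Along a closed-loop trajectory, with feasible multipliers chosen at every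
   state, a_k = V(x_k, psi x_k, lam_k) is nonnegative and drops by at least
   ||x_k||^2 at each step, so x_k -> 0.  Stability follows once
   V(x, psi x, lam(x)) tends to a constant c0 as x -> 0 for some feasible
   selection lam: if x_0 is small, pick N > k with x_N small; then
   ||x_k||^2 <= a_0 - a_N is small.  When V ignores (u, lam) this is just
   continuity of V.  When the minimal cost ||u|| + ||lam|| is bounded near 0,
   the triples (x, psi x, lam(x)) near x = 0 stay in a compact set of feasible
   triples, on which a continuous function constant on the fibre over x = 0
   tends to that constant as x -> 0.  Since psi need not be continuous, this is
   first applied to f, to get f(0, psi 0) = 0; then V(0, psi 0, .) is constant
   on the feasible multipliers at 0, and the argument applies to V. *)

Section norm2.
Local Set Implicit Arguments.
Local Unset Strict Implicit.
Variables (R : realType) (k : nat).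
Implicit Type v : 'rV[R]_k.

Lemma norm2_ge0 v : 0 <= norm2 v.
Proof. exact: sqrtr_ge0. Qed.

Lemma coord_le_norm2 v i : `|v ord0 i| <= norm2 v.
Proof.
have sqr_sum : norm2 v ^+ 2 = \sum_(j < k) v ord0 j ^+ 2.
  by rewrite sqr_sqrtr // sumr_ge0 // => j _; rewrite sqr_ge0.
rewrite -ler_sqr ?nnegrE ?norm2_ge0 // sqr_sum real_normK ?num_real //.
by rewrite (bigD1 i) //= lerDl sumr_ge0 // => j _; rewrite sqr_ge0.
Qed.

Lemma normr_le_norm2 v : `|v| <= norm2 v.
Proof.
rewrite [`|v|]mx_normrE; apply: bigmax_le => [|[i j] _]; first exact: norm2_ge0.
by rewrite (ord1 i); exact: coord_le_norm2.
Qed.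

Lemma norm2_cvg0 (X : Type) (F : set_system X) {FF : Filter F} (u : X -> 'rV[R]_k) :
  norm2 (u x) @[x --> F] --> 0 -> u @ F --> (0 : 'rV[R]_k).
Proof.
move=> /cvgrPdist_lt u_cvg; apply/cvgrPdist_lt => e /u_cvg.
apply: filterS => x; rewrite !sub0r !normrN ger0_norm ?norm2_ge0 //.
exact: le_lt_trans (normr_le_norm2 _).
Qed.

Lemma compact_norm_le (M : R) : compact [set v : 'rV[R]_k | `|v| <= M].
Proof.
apply: bounded_closed_compact.
  by exists M; split; [exact: num_real | move=> N MN v /= vM; exact: le_trans vM (ltW MN)].
exact: (proj1 (continuous_closedP _) (@norm_continuous _ 'rV[R]_k)) _ (@closed_le _ M).
Qed.

End norm2.

Section descent.
Local Set Implicit Arguments.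
Local Unset Strict Implicit.
Variables (R : realType) (a b : R ^nat).
Hypotheses (a_ge0 : forall k, 0 <= a k) (a_descent : forall k, a k.+1 + b k ^+ 2 <= a k).

Lemma descent_nonincreasing : {homo a : i j / (i <= j)%N >-> j <= i}.
Proof.
move=> i j /subnK <-; elim: (j - i)%N => // d IH.
by rewrite addSn (le_trans _ IH) // (le_trans _ (a_descent _)) // lerDl sqr_ge0.
Qed.

Lemma descent_sqr_le k j : (k <= j)%N -> b k ^+ 2 <= a 0%N - a j.+1.
Proof.
move=> kj; have := a_descent k.
have := @descent_nonincreasing 0 k (leq0n k).
have := @descent_nonincreasing k.+1 j.+1 kj; lra.
Qed.

Lemma descent_cvg0 : b @ \oo --> 0.
Proof.
have a_lb : has_lbound (range a) by exists 0 => _ [k _ <-].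
have a_cvg := nonincreasing_cvgn descent_nonincreasing a_lb.
have gap_cvg0 : a k - a k.+1 @[k --> \oo] --> (0 : R).
  rewrite -(subrr (inf (range a))); apply: cvgB => //.
  by rewrite (cvg_shiftS a).
apply/cvgrPdist_lt => e e0; move/cvgrPdist_lt: gap_cvg0 => /(_ _ (exprn_gt0 2 e0)).
apply: filterS => k; rewrite !sub0r !normrN => gap_lt.
have := a_descent k; have := ler_norm (a k - a k.+1).
move=> ? ?; rewrite ltr_norml; apply/andP; split; nra.
Qed.

End descent.

Section polynomial_continuity.
Context {R : realType}.

Lemma fst_continuous (U V : topologicalType) : continuous (@fst U V).
Proof. by move=> [u v]; exact: cvg_fst. Qed.

Lemma snd_continuous (U V : topologicalType) : continuous (@snd U V).
Proof. by move=> [u v]; exact: cvg_snd. Qed.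

Lemma poly_fun_continuous_comp {T : topologicalType} {k} {phi : T -> 'rV[R]_k} {P} :
  (forall i, continuous (fun t => phi t ord0 i)) -> poly_fun P -> continuous (P \o phi).
Proof.
move=> phi_cont; elim => [a|i|p q _ p_cont _ q_cont|p q _ p_cont _ q_cont] t.
- exact: cvg_cst.
- exact: phi_cont.
- exact: cvgD (p_cont t) (q_cont t).
- exact: cvgM (p_cont t) (q_cont t).
Qed.

Lemma row_mx_coord_continuous {T : topologicalType} {p q}
    {a : T -> 'rV[R]_p} {b : T -> 'rV[R]_q} :
  (forall i, continuous (fun t => a t ord0 i)) ->
  (forall i, continuous (fun t => b t ord0 i)) ->
  forall i, continuous (fun t => row_mx (a t) (b t) ord0 i).
Proof.
move=> a_cont b_cont i; rewrite -[i]fintype.splitK; case: (fintype.split i) => j /=.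
- by under eq_fun do rewrite row_mxEl; exact: a_cont.
- by under eq_fun do rewrite row_mxEr; exact: b_cont.
Qed.

Lemma fst_coord_continuous {U : topologicalType} k i :
  continuous (fun w : 'rV[R]_k * U => w.1 ord0 i).
Proof. by move=> w; apply: continuous_comp (@coord_continuous R 1 k ord0 i w.1); exact: fst_continuous. Qed.

Lemma snd_coord_continuous {U : topologicalType} k i :
  continuous (fun w : U * 'rV[R]_k => w.2 ord0 i).
Proof. by move=> w; apply: continuous_comp (@coord_continuous R 1 k ord0 i w.2); exact: snd_continuous. Qed.

Lemma poly_map2_continuous {n m l} {F : 'rV[R]_n -> 'rV[R]_m -> 'rV[R]_l} :
  poly_map2 F -> forall j, continuous (fun w : 'rV[R]_n * 'rV[R]_m => F w.1 w.2 ord0 j).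
Proof.
move=> F_poly j.
have -> : (fun w : 'rV[R]_n * 'rV[R]_m => F w.1 w.2 ord0 j) =
    (fun z => F (lsubmx z) (rsubmx z) ord0 j) \o (fun w => row_mx w.1 w.2).
  by apply: funext => w /=; rewrite row_mxKl row_mxKr.
exact: poly_fun_continuous_comp
  (row_mx_coord_continuous (fst_coord_continuous n) (snd_coord_continuous m)) (F_poly j).
Qed.

Lemma poly_map3_continuous {n m p l}
    {F : 'rV[R]_n -> 'rV[R]_m -> 'rV[R]_p -> 'rV[R]_l} :
  poly_map3 F ->
  forall j, continuous (fun w : 'rV[R]_n * 'rV[R]_m * 'rV[R]_p => F w.1.1 w.1.2 w.2 ord0 j).
Proof.
move=> F_poly j.
have fst_fst_coord_cont i :
    continuous (fun w : 'rV[R]_n * 'rV[R]_m * 'rV[R]_p => w.1.1 ord0 i).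
  by move=> w; apply: continuous_comp (fst_coord_continuous n i w.1); exact: fst_continuous.
have snd_fst_coord_cont i :
    continuous (fun w : 'rV[R]_n * 'rV[R]_m * 'rV[R]_p => w.1.2 ord0 i).
  by move=> w; apply: continuous_comp (snd_coord_continuous m i w.1); exact: fst_continuous.
have -> : (fun w : 'rV[R]_n * 'rV[R]_m * 'rV[R]_p => F w.1.1 w.1.2 w.2 ord0 j) =
    (fun z => F (lsubmx (lsubmx z)) (rsubmx (lsubmx z)) (rsubmx z) ord0 j) \o
    (fun w => row_mx (row_mx w.1.1 w.1.2) w.2).
  by apply: funext => w /=; rewrite !row_mxKl !row_mxKr.
exact: poly_fun_continuous_comp (row_mx_coord_continuous
  (row_mx_coord_continuous fst_fst_coord_cont snd_fst_coord_cont)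
  (snd_coord_continuous p)) (F_poly j).
Qed.

End polynomial_continuity.

Lemma compact_fiber_cvg {R : realType} {X : Type} {F : set_system X} {FF : Filter F}
    {T U : topologicalType} (K : set T) (p : T -> U) (u0 : U) (Phi : T -> R) (c : R)
    (s : X -> T) :
  hausdorff_space U -> compact K -> continuous p -> continuous Phi ->
  (forall w, K w -> p w = u0 -> Phi w = c) ->
  (\forall x \near F, K (s x)) -> p (s x) @[x --> F] --> u0 ->
  Phi (s x) @[x --> F] --> c.
Proof.
move=> U_sep K_compact p_cont Phi_cont Phi_fiber s_K ps_cvg.
apply/cvgrPdist_lt => e e0.
pose A := K `&` [set w | e <= `|c - Phi w|].
have A_compact : compact A.
  apply: (compact_closedI K_compact); apply: (proj1 (continuous_closedP _)) (@closed_ge _ e).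
  by move=> w; apply: cvg_norm; apply: cvgB; [exact: cvg_cst | exact: Phi_cont].
have pA_closed : closed (p @` A).
  by apply: compact_closed U_sep _; apply: continuous_compact A_compact; exact: continuous_subspaceT.
have u0_notin_pA : ~ (p @` A) u0.
  move=> [w [Kw]]; rewrite /= leNgt => /negP + pw; apply.
  by rewrite Phi_fiber // subrr normr0.
have /ps_cvg : nbhs u0 (~` (p @` A)) by apply: open_nbhs_nbhs; split; rewrite ?openC.
move=> /(filterI s_K); apply: filterS => x [Ksx psx_notin].
by rewrite ltNge; apply/negP => le_e; apply: psx_notin; exists (s x).
Qed.

Section closed_loop.
Local Set Implicit Arguments.
Local Unset Strict Implicit.
Variables (R : realType) (n m nl pg ph : nat).
Variables (f : 'rV[R]_n -> 'rV[R]_m -> 'rV[R]_n) (psi : 'rV[R]_n -> 'rV[R]_m)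
  (g : 'rV[R]_n -> 'rV[R]_m -> 'rV[R]_nl -> 'rV[R]_pg)
  (h : 'rV[R]_n -> 'rV[R]_m -> 'rV[R]_nl -> 'rV[R]_ph)
  (V : 'rV[R]_n * 'rV[R]_m * 'rV[R]_nl -> R).
Hypothesis psi_graph : forall x u, u = psi x <-> exists lam, feasible g h x u lam.
Hypothesis V_descent : forall x u lam xp up lamp,
  xp = f x u -> feasible g h x u lam -> feasible g h xp up lamp ->
  V (xp, up, lamp) - V (x, u, lam) <= - (norm2 x ^+ 2) /\ 0 <= V (x, u, lam).

Local Notation x_ := (traj f psi).

Lemma feasible_psi x : exists lam, feasible g h x (psi x) lam.
Proof. exact/psi_graph. Qed.

Lemma feasible_eq_psi x u lam : feasible g h x u lam -> u = psi x.
Proof. by move=> F; apply/psi_graph; exists lam. Qed.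

Section selection.
Variable sel : 'rV[R]_n -> 'rV[R]_nl.
Hypothesis sel_feasible : forall x, feasible g h x (psi x) (sel x).

Local Notation V_ x := (V (x, psi x, sel x)).

Lemma V_ge0 x : 0 <= V_ x.
Proof. exact: (V_descent (erefl _) (sel_feasible x) (sel_feasible _)).2. Qed.

Lemma V_traj_descent x0 k : V_ (x_ x0 k.+1) + norm2 (x_ x0 k) ^+ 2 <= V_ (x_ x0 k).
Proof.
have [desc _] := V_descent (erefl (x_ x0 k.+1)) (sel_feasible _) (sel_feasible _).
lra.
Qed.

Lemma traj_cvg0 x0 : x_ x0 @ \oo --> (0 : 'rV[R]_n).
Proof.
by apply: norm2_cvg0; apply: (descent_cvg0 (fun k => V_ge0 _)) (V_traj_descent x0).
Qed.

Lemma lyapunov_stable_of_V_cvg (c0 : R) :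
  V_ x @[x --> (0 : 'rV[R]_n)] --> c0 -> lyapunov_stable f psi.
Proof.
move=> /cvgrPdist_lt V_cvg eps eps0.
have [d d0 V_near] : exists2 d : R, 0 < d &
    forall x : 'rV[R]_n, `|x| < d -> `|c0 - V_ x| < eps ^+ 2 / 2.
  have /nbhs_norm0P [d d0 Hd] := V_cvg _ (divr_gt0 (exprn_gt0 2 eps0) (ltr0n _ 2)).
  by exists d.
exists (d / 2); first by rewrite divr_gt0.
move=> x0 x0_le k.
have x0_near : `|x0| < d by have := normr_le_norm2 x0; lra.
have /cvgrPdist_lt /(_ d d0) traj_near := traj_cvg0 x0.
have [N [xN_near kN]] := filter_ex (filterI traj_near (nbhs_infty_gt k)).
case: N xN_near kN => // j; rewrite sub0r normrN ltnS => xj_near kj.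
(* ||x_k||^2 <= V(x_0) - V(x_(j+1)), and both values are within eps^2/2 of c0. *)
have := descent_sqr_le (V_traj_descent x0) kj.
have := V_near _ x0_near; have := V_near _ xj_near; rewrite !ltr_norml.
have := norm2_ge0 (x_ x0 k); nra.
Qed.

End selection.

Lemma closed_loop_attractive : globally_attractive f psi.
Proof. by have [sel sel_feasible] := choice feasible_psi; exact: traj_cvg0. Qed.

Lemma exists_feasible_lt_min_cost x e : 0 < e ->
  exists lam, feasible g h x (psi x) lam /\ norm2 (psi x) + norm2 lam < min_cost g h x + e.
Proof.
move=> e0; have [lam0 F0] := feasible_psi x.
have cost_ne0 : [set c | exists u lam, feasible g h x u lam /\ c = norm2 u + norm2 lam] !=set0.
  by exists (norm2 (psi x) + norm2 lam0), (psi x), lam0.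
have cost_lt : min_cost g h x < min_cost g h x + e by rewrite ltrDl.
have [_ [u [lam [F ->]]] lt_cost] := inf_lt cost_ne0 cost_lt.
by rewrite -(feasible_eq_psi F); exists lam.
Qed.

Lemma bounded_selection_of_min_cost :
  (exists B : R, \forall x \near (0 : 'rV[R]_n), `|min_cost g h x| <= B) ->
  exists sel : 'rV[R]_n -> 'rV[R]_nl, exists M : R,
    (forall x, feasible g h x (psi x) (sel x)) /\
    \forall x \near (0 : 'rV[R]_n), `|x| <= M /\ `|psi x| <= M /\ `|sel x| <= M.
Proof.
move=> [B cost_bounded].
have sel_ex x : exists lam, feasible g h x (psi x) lam /\
    (`|min_cost g h x| <= B -> norm2 (psi x) + norm2 lam <= B + 1).
  have [x_good|x_bad] := pselect (`|min_cost g h x| <= B).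
    have [lam [F lt_cost]] := exists_feasible_lt_min_cost x ltr01.
    exists lam; split=> // _; have := ler_norm (min_cost g h x); lra.
  by have [lam F] := feasible_psi x; exists lam; split=> // /x_bad.
have [sel sel_spec] := choice sel_ex.
exists sel, (`|B| + 2); split=> [x|]; first exact: (sel_spec x).1.
have x_small : \forall x \near (0 : 'rV[R]_n), `|x| < 1.
  by apply/nbhs_norm0P; exists 1; [exact: ltr01 | move=> y].
apply: filterS (filterI cost_bounded x_small) => x [/(sel_spec x).2 sum_le x_lt1].
have := normr_le_norm2 (psi x); have := normr_le_norm2 (sel x).
have := norm2_ge0 (psi x); have := norm2_ge0 (sel x); have := ler_norm B.
split; [|split]; lra.
Qed.

Hypotheses (f_poly : poly_map2 f) (g_poly : poly_map3 g) (h_poly : poly_map3 h)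
  (V_cont : continuous V).

Local Notation state := ('rV[R]_n * 'rV[R]_m * 'rV[R]_nl)%type.

Lemma feasible_closed : closed [set w : state | feasible g h w.1.1 w.1.2 w.2].
Proof.
have -> : [set w : state | feasible g h w.1.1 w.1.2 w.2] =
    \bigcap_i [set w | 0 <= g w.1.1 w.1.2 w.2 ord0 i] `&`
    \bigcap_i [set w | h w.1.1 w.1.2 w.2 ord0 i = 0].
  apply/seteqP; split=> w.
    by move=> [g_ge0 h_eq0]; split=> i _ //=; rewrite h_eq0 mxE.
  by move=> [g_ge0 h_eq0]; split=> [i|]; [exact: g_ge0 | apply/rowP => i; rewrite mxE h_eq0].
apply: closedI; apply: closed_bigI => i _.
- exact: (proj1 (continuous_closedP _) (poly_map3_continuous g_poly i)) _ (@closed_ge _ 0).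
- exact: (proj1 (continuous_closedP _) (poly_map3_continuous h_poly i)) _ (@closed_eq _ 0).
Qed.

Lemma lyapunov_stable_of_V_indep :
  (forall x u lam u' lam', V (x, u, lam) = V (x, u', lam')) -> lyapunov_stable f psi.
Proof.
move=> V_indep; have [sel sel_feasible] := choice feasible_psi.
apply: (lyapunov_stable_of_V_cvg sel_feasible (c0 := V (0, 0, 0))).
under eq_fun do rewrite (V_indep _ _ _ 0 0).
have pair_cvg : (x, 0, 0) @[x --> (0 : 'rV[R]_n)] -->
    ((0 : 'rV[R]_n), (0 : 'rV[R]_m), (0 : 'rV[R]_nl)).
  have id_cvg : x @[x --> (0 : 'rV[R]_n)] --> (0 : 'rV[R]_n) by exact: cvg_id.
  have u_cvg : (0 : 'rV[R]_m) @[_ --> (0 : 'rV[R]_n)] --> (0 : 'rV[R]_m).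
    by apply: cvg_cst; exact: nbhs_filter.
  have lam_cvg : (0 : 'rV[R]_nl) @[_ --> (0 : 'rV[R]_n)] --> (0 : 'rV[R]_nl).
    by apply: cvg_cst; exact: nbhs_filter.
  exact: cvg_pair (cvg_pair id_cvg u_cvg) lam_cvg.
have V_at0 : V @ ((0 : 'rV[R]_n), (0 : 'rV[R]_m), (0 : 'rV[R]_nl)) --> V (0, 0, 0).
  exact: V_cont.
exact: cvg_comp _ _ pair_cvg V_at0.
Qed.

Section bounded_selection.
Variables (sel : 'rV[R]_n -> 'rV[R]_nl) (M : R).
Hypotheses (sel_feasible : forall x, feasible g h x (psi x) (sel x))
  (sel_bounded : \forall x \near (0 : 'rV[R]_n), `|x| <= M /\ `|psi x| <= M /\ `|sel x| <= M).

Lemma graph_cvg (Phi : state -> R) (c : R) : continuous Phi ->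
  (forall u lam, feasible g h 0 u lam -> Phi (0, u, lam) = c) ->
  Phi (x, psi x, sel x) @[x --> (0 : 'rV[R]_n)] --> c.
Proof.
move=> Phi_cont Phi_origin.
pose ballM k := [set v : 'rV[R]_k | `|v| <= M].
apply: (compact_fiber_cvg (F := nbhs (0 : 'rV[R]_n))
  ((ballM n `*` ballM m `*` ballM nl) `&` [set w | feasible g h w.1.1 w.1.2 w.2])
  (fun w => w.1.1) 0).
- exact: norm_hausdorff.
- apply: compact_closedI feasible_closed.
  by apply: compact_setX; first apply: compact_setX; exact: compact_norm_le.
- by move=> w; apply: continuous_comp (@fst_continuous _ _ w.1); exact: fst_continuous.
- exact: Phi_cont.
- by move=> [[x u] lam] [_ F] /= x0; move: F; rewrite x0; exact: Phi_origin.
- apply: filterS sel_bounded => x [x_le [psi_le sel_le]].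
  by split; [split; first split | exact: sel_feasible].
- exact: cvg_id.
Qed.

Lemma psi_fixed_point : f 0 (psi 0) = 0.
Proof.
apply/rowP => j; rewrite mxE.
have Phi_cvg : f x (psi x) ord0 j @[x --> (0 : 'rV[R]_n)] --> f 0 (psi 0) ord0 j.
  apply: (graph_cvg (Phi := fun w => f w.1.1 w.1.2 ord0 j)) => [w|u lam /feasible_eq_psi -> //].
  exact: continuous_comp (@fst_continuous _ _ w) (poly_map2_continuous f_poly j w.1).
have traj_cvg := traj_cvg0 sel_feasible 0.
have coord_cvg : x_ 0 k.+1 ord0 j @[k --> \oo] --> (0 : R).
  rewrite (cvg_shiftS (fun k => x_ 0 k ord0 j)).
  by have := cvg_comp _ _ traj_cvg (@coord_continuous _ 1 n ord0 j 0); rewrite mxE.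
have Phi_traj_cvg := cvg_comp _ _ traj_cvg Phi_cvg.
by apply: (cvg_unique (@norm_hausdorff _ R^o) Phi_traj_cvg coord_cvg).
Qed.

Lemma V_origin_const lam : feasible g h 0 (psi 0) lam -> V (0, psi 0, lam) = V (0, psi 0, sel 0).
Proof.
move=> F; have := sqr_ge0 (norm2 (0 : 'rV[R]_n)).
have [+ _] := V_descent (esym psi_fixed_point) F (sel_feasible 0).
have [+ _] := V_descent (esym psi_fixed_point) (sel_feasible 0) F.
lra.
Qed.

Lemma lyapunov_stable_of_bounded_selection : lyapunov_stable f psi.
Proof.
apply: (lyapunov_stable_of_V_cvg sel_feasible (c0 := V (0, psi 0, sel 0))).
apply: (graph_cvg V_cont) => u lam F.
by have u_psi := feasible_eq_psi F; rewrite u_psi in F *; exact: V_origin_const.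
Qed.

End bounded_selection.

Lemma lyapunov_stable_of_min_cost_bounded :
  (exists B : R, \forall x \near (0 : 'rV[R]_n), `|min_cost g h x| <= B) -> lyapunov_stable f psi.
Proof.
move=> /bounded_selection_of_min_cost [sel [M [sel_feasible sel_bounded]]].
exact: lyapunov_stable_of_bounded_selection sel_feasible sel_bounded.
Qed.

End closed_loop.

Theorem theorem1 (R : realType) (n m nl pg ph : nat)
  (f : 'rV[R]_n -> 'rV[R]_m -> 'rV[R]_n)
  (psi : 'rV[R]_n -> 'rV[R]_m)
  (g : 'rV[R]_n -> 'rV[R]_m -> 'rV[R]_nl -> 'rV[R]_pg)
  (h : 'rV[R]_n -> 'rV[R]_m -> 'rV[R]_nl -> 'rV[R]_ph)
  (V : 'rV[R]_n * 'rV[R]_m * 'rV[R]_nl -> R) :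
  poly_map2 f -> poly_map3 g -> poly_map3 h ->
  (forall (x : 'rV[R]_n) (u : 'rV[R]_m),
      u = psi x <-> exists lam : 'rV[R]_nl, feasible g h x u lam) ->
  continuous V ->
  (forall x u lam xp up lamp,
      xp = f x u -> feasible g h x u lam -> feasible g h xp up lamp ->
      V (xp, up, lamp) - V (x, u, lam) <= - (norm2 x ^+ 2) /\ 0 <= V (x, u, lam)) ->
  globally_attractive f psi /\
  ((exists B : R, \forall x \near (0 : 'rV[R]_n), `|min_cost g h x| <= B)
   \/ (forall x u lam u' lam', V (x, u, lam) = V (x, u', lam')) ->
   GAS f psi).
Proof.
move=> f_poly g_poly h_poly psi_graph V_cont V_descent.
have attractive := closed_loop_attractive psi_graph V_descent.
split=> // -[cost_bounded | V_indep]; split=> //.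
- exact: lyapunov_stable_of_min_cost_bounded psi_graph V_descent
    f_poly g_poly h_poly V_cont cost_bounded.
- exact: lyapunov_stable_of_V_indep psi_graph V_descent V_cont V_indep.
Qed.
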